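(* Let $SG=(G,\sigma)$ be a signed graph with a total order on $E(G)$. If $z\in C^i(G)$ satisfies $f_b(z)=0$, then $f_b(d(z))=0$. Consequently $d_b:C^i_b(SG)\to C^{i+1}_b(SG)$ satisfies $d_b\circ f_b=f_b\circ d$ and $d_b\circ d_b=0$.
   Context: Signed graphs: $SG=(G,\sigma)$, $G$ finite (loops, multiple edges allowed), $\sigma:E(G)\to\{\pm1\}$. Negative circuit: product of edge signs $-1$; balanced = no negative circuit. $[G:s]$, $[SG:s]$: spanning subgraph with edge set $s$. Fix a total order on $E(G)$. An enhanced state of $G$ is $S=(s,c)$, $c$ labels each component of $[G:s]$ by $1$ or $x$; $C^i(G)$ is free on enhanced states with $|s|=i$. With $m(1,1)=1$, $m(1,x)=m(x,1)=x$, $m(x,x)=0$: for $e\notin s$, $S_e=(s\cup\{e\},c_e)$ where a component containing both ends of $e$ keeps its label and if $e$ joins components $E_i,E_j$ the merged one gets $m(c(E_i),c(E_j))$ ($S_e=0$ if both are $x$). $d(S)=\sum_{e\notin s}(-1)^{n(e)}S_e$, $n(e)$ = number of edges of $s$ preceding $e$; it is known that $d\circ d=0$. $C^i_b(SG)\subseteq C^i(G)$ is spanned by enhanced states with $[SG:s]$ balanced; $f_b:C^i(G)\to C^i_b(SG)$ is the linear projection sending an enhanced state to itself if $[SG:s]$ is balanced and to $0$ otherwise; $d_b(S):=f_b(d(S))$. *)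

From HB Require Import structures.
From mathcomp Require Import all_boot all_order all_algebra.
Set Implicit Arguments. Unset Strict Implicit. Unset Printing Implicit Defensive.
Import Order.TTheory GRing.Theory Num.Theory.
Local Open Scope ring_scope.

(* A finite graph G: vertex set V (a finType), edge set 'I_m (edges are
   numbered 0..m-1; the fixed total order on E(G) is the order of the
   indices).  [ends e = (u,v)] gives the two end vertices of e (u = v for a
   loop); multiple edges are allowed (distinct indices may have equal ends).
   The signature is sigma : 'I_m -> int with values in {1,-1}. *)

Notation state V m := ({set 'I_m} * {ffun V -> bool})%type.
Notation chain V m := {ffun state V m -> int}.

Section SignedGraph.
Variables (V : finType) (m : nat) (ends : 'I_m -> V * V) (sigma : 'I_m -> int).

Definition joins (e : 'I_m) (a b : V) : bool :=
  (ends e == (a, b)) || (ends e == (b, a)).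

Definition adj (s : {set 'I_m}) : rel V :=
  fun a b => [exists e, (e \in s) && joins e a b].

Definition sconn (s : {set 'I_m}) (a b : V) : bool := connect (adj s) a b.

(* A circuit of [G:s] of length k >= 1: pairwise distinct edges
   es_0..es_{k-1} of s and pairwise distinct vertices vs_0..vs_{k-1} such
   that es_j joins vs_j and vs_{j+1 mod k}
   (k = 1: a loop; k = 2: two parallel edges; k >= 3: a cycle). *)
Definition is_circuit (s : {set 'I_m}) (k : nat)
    (es : k.-tuple 'I_m) (vs : k.-tuple V) : bool :=
  [&& (0 < k)%N, uniq es, uniq vs,
      all (fun e => e \in s) es &
      [forall j : 'I_k, joins (tnth es j) (tnth vs j) (tnth vs (ordS j))]].

Definition is_neg_circuit (s : {set 'I_m}) (k : nat)
    (es : k.-tuple 'I_m) (vs : k.-tuple V) : bool :=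
  is_circuit s es vs && (\prod_(e <- es) sigma e == -1).

(* [SG:s] is balanced: it has no negative circuit.  Since the vertices of a
   circuit are pairwise distinct, its length k is at most #|V|, so the
   quantification over k <= #|V| covers all circuits. *)
Definition balanced (s : {set 'I_m}) : bool :=
  ~~ [exists k : 'I_#|V|.+1, [exists es : k.-tuple 'I_m,
        [exists vs : k.-tuple V, is_neg_circuit s es vs]]].

(* Enhanced states.  A pair (s, c) with c : V -> bool constant on the
   connected components of [G:s]; c v = false encodes the label 1 and
   c v = true encodes the label x of the component of v. *)

Definition valid_state (S : state V m) : bool :=
  [forall a, forall b, sconn S.1 a b ==> (S.2 a == S.2 b)].

(* Chains: elements of the free Z-module on enhanced states, represented by
   their coefficient functions (zero outside valid states). *)

Definition inC (i : nat) (z : chain V m) : Prop :=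
  forall S, z S != 0 -> valid_state S /\ #|S.1| = i.

(* S_e, for e not in s: None encodes S_e = 0.
   If both ends of e are in the same component, labels are kept; otherwise
   the merged component gets m(c(E_i), c(E_j)) = c u || c v, and S_e = 0
   when both labels are x. *)
Definition state_e (S : state V m) (e : 'I_m) : option (state V m) :=
  let u := (ends e).1 in let v := (ends e).2 in
  let s := S.1 in let c := S.2 in
  if sconn s u v then Some (e |: s, c)
  else if c u && c v then None
  else Some (e |: s,
             [ffun w => if sconn s u w || sconn s v w then c u || c v else c w]).

Definition opt_coef (o : option (state V m)) (T : state V m) : int :=
  if o is Some T' then (T == T')%:R else 0.

Definition n_before (s : {set 'I_m}) (e : 'I_m) : nat :=
  #|[set e' in s | (e' < e)%N]|.

Definition d_state (S : state V m) : chain V m :=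
  [ffun T => \sum_(e | e \notin S.1)
                (-1) ^+ n_before S.1 e * opt_coef (state_e S e) T].

Definition d (z : chain V m) : chain V m :=
  [ffun T => \sum_(S : state V m) z S * d_state S T].

Definition f_b (z : chain V m) : chain V m :=
  [ffun S => if balanced S.1 then z S else 0].

Definition inCb (i : nat) (z : chain V m) : Prop :=
  inC i z /\ forall S, z S != 0 -> balanced S.1.

Definition d_b (z : chain V m) : chain V m := f_b (d z).

End SignedGraph.

(* For a valid enhanced state S = (s, c), the state S_e depends on e only
   through the edge set e |: s: it vanishes iff e |: s connects two distinct
   x-labelled components of [G:s], and otherwise a component of [G:e |: s] is
   labelled x iff it contains an x-labelled vertex of S ([enlarge]).  So
   (S_e)_e' = (S_e')_e, while the two orders carry opposite signs, and
   d o d = 0.  Since d only adds edges and every spanning subgraph of a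
   balanced graph is balanced, d maps the kernel of f_b into itself; this
   gives d_b o f_b = f_b o d and then d_b o d_b = f_b o d o d = 0. *)

From HB Require Import structures.
From mathcomp Require Import all_boot all_order all_algebra.
Set Implicit Arguments. Unset Strict Implicit. Unset Printing Implicit Defensive.
Import GRing.Theory Num.Theory.
Local Open Scope ring_scope.

Lemma connect_stable (T : finType) (r : rel T) (P : pred T) a b :
  P a -> (forall x y, P x -> r x y -> P y) -> connect r a b -> P b.
Proof.
move=> Pa stepP /connectP[p rp ->]; elim: p a Pa rp => [|y p IHp] x Px //=.
by case/andP=> rxy; apply: IHp (stepP _ _ Px rxy).
Qed.

Section Components.
Variables (V : finType) (m : nat) (ends : 'I_m -> V * V).
Implicit Types (s t : {set 'I_m}) (c : {ffun V -> bool}) (e : 'I_m).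
Implicit Types (a b w : V) (S T : state V m).

Local Notation sconn := (sconn ends).

Lemma adj_sym s : symmetric (adj ends s).
Proof.
by move=> a b; apply/existsP/existsP=> -[e /andP[es eab]];
  exists e; rewrite es /joins orbC.
Qed.

Lemma sconn_sym s : symmetric (sconn s).
Proof. exact/sym_connect_sym/adj_sym. Qed.

Lemma sconnxx s a : sconn s a a.
Proof. exact: connect0. Qed.

Lemma sconn_trans s b a w : sconn s a b -> sconn s b w -> sconn s a w.
Proof. exact: connect_trans. Qed.

Lemma sconnS s t a b : s \subset t -> sconn s a b -> sconn t a b.
Proof.
move=> st; apply: connect_sub => x y /existsP[e /andP[es exy]].
by apply/connect1/existsP; exists e; rewrite (subsetP st _ es).
Qed.

Lemma sconnU1 s e a b :
  sconn (e |: s) a b =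
  [|| sconn s a b,
      sconn s a (ends e).1 && sconn s (ends e).2 b |
      sconn s a (ends e).2 && sconn s (ends e).1 b].
Proof.
set u := (ends e).1; set v := (ends e).2.
have s_se : s \subset e |: s by exact: subsetU1.
have uv : sconn (e |: s) u v.
  by apply/connect1/existsP; exists e; rewrite setU11 /joins -surjective_pairing eqxx.
apply/idP/idP; last first.
  case/or3P=> [|/andP[au vb]|/andP[av ub]]; first exact: sconnS.
    by apply: sconn_trans (sconn_trans (sconnS s_se au) uv) (sconnS s_se vb).
  rewrite sconn_sym in uv.
  by apply: sconn_trans (sconn_trans (sconnS s_se av) uv) (sconnS s_se ub).
apply: (connect_stable (P := fun b => [|| sconn s a b,
  sconn s a u && sconn s v b | sconn s a v && sconn s u b])).
  by rewrite sconnxx.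
move=> x y Px /existsP[f /andP[]]; rewrite in_setU1 => /orP[/eqP-> | fs] fxy.
  move: Px; have [[-> ->] | [-> ->]] : x = u /\ y = v \/ x = v /\ y = u.
  - by case/orP: fxy => /eqP E; [left | right]; rewrite /u /v E.
  - by case/or3P=> [->|/andP[-> _]|/andP[-> _]];
      rewrite ?sconnxx ?orbT.
  - by case/or3P=> [->|/andP[-> _]|/andP[-> _]];
      rewrite ?sconnxx ?orbT.
have xy : sconn s x y by apply/connect1/existsP; exists f; rewrite fs.
case/or3P: Px => [ax|/andP[-> vx]|/andP[-> ux]].
- by rewrite (sconn_trans ax xy).
- by rewrite (sconn_trans vx xy) orbT.
- by rewrite (sconn_trans ux xy) !orbT.
Qed.

Definition spread_x t c : {ffun V -> bool} :=
  [ffun w => [exists x, sconn t w x && c x]].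

Definition links_x s c t : bool :=
  [exists x, exists y, [&& c x, c y, sconn t x y & ~~ sconn s x y]].

Definition enlarge (S : state V m) t : option (state V m) :=
  if links_x S.1 S.2 t then None else Some (t, spread_x t S.2).

Lemma valid_state_sconn s c a b :
  valid_state ends (s, c) -> sconn s a b -> c a = c b.
Proof. by move=> /forallP/(_ a)/forallP/(_ b)/implyP sc /sc/eqP. Qed.

Lemma valid_spread_x t c : valid_state ends (t, spread_x t c).
Proof.
apply/forallP=> a; apply/forallP=> b; apply/implyP=> /= ab; rewrite !ffunE.
apply/eqP; apply/idP/idP=> /existsP[x /andP[sx cx]];
  apply/existsP; exists x; rewrite cx andbT.
  by rewrite sconn_sym in ab; apply: sconn_trans ab sx.
exact: sconn_trans ab sx.
Qed.

Lemma spread_xS s t c : s \subset t -> spread_x t (spread_x s c) = spread_x t c.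
Proof.
move=> st; apply/ffunP=> w; rewrite !ffunE.
apply/existsP/existsP=> -[x /andP[wx]].
  by rewrite ffunE => /existsP[y /andP[xy cy]];
    exists y; rewrite cy (sconn_trans wx (sconnS st xy)).
by move=> cx; exists x; rewrite wx ffunE; apply/existsP; exists x; rewrite sconnxx.
Qed.

Lemma links_x_trans s t t2 c : s \subset t -> t \subset t2 ->
  links_x s c t2 = links_x s c t || links_x t (spread_x t c) t2.
Proof.
move=> st tt2; apply/idP/orP.
  case/existsP=> x /existsP[y /and4P[cx cy xy nxy]].
  have [txy | ntxy] := boolP (sconn t x y).
    by left; apply/existsP; exists x; apply/existsP; exists y; rewrite cx cy txy.
  right; apply/existsP; exists x; apply/existsP; exists y.
  by rewrite xy ntxy !ffunE !andbT; apply/andP; split; apply/existsP;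
    [exists x | exists y]; rewrite sconnxx.
case=> /existsP[x /existsP[y /and4P[cx cy xy nxy]]].
  apply/existsP; exists x; apply/existsP; exists y.
  by rewrite cx cy nxy (sconnS tt2 xy).
move: cx cy; rewrite !ffunE.
case/existsP=> x' /andP[xx' cx'] /existsP[y' /andP[yy' cy']].
apply/existsP; exists x'; apply/existsP; exists y'; rewrite cx' cy' /=.
apply/andP; split.
  rewrite sconn_sym in xx'.
  exact: sconn_trans (sconnS tt2 xx') (sconn_trans xy (sconnS tt2 yy')).
apply: contra nxy => sxy; rewrite sconn_sym in yy'.
exact: sconn_trans xx' (sconn_trans (sconnS st sxy) yy').
Qed.

Lemma enlarge_trans S t t2 : S.1 \subset t -> t \subset t2 ->
  obind (enlarge^~ t2) (enlarge S t) = enlarge S t2.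
Proof.
case: S => s c /= st tt2; rewrite /enlarge /= (links_x_trans c st tt2).
by case: (links_x s c t) => //=; rewrite spread_xS.
Qed.

Lemma enlarge_some S t T :
  enlarge S t = Some T -> valid_state ends T /\ T.1 = t.
Proof.
by rewrite /enlarge; case: ifP => // _ [<-]; split; first exact: valid_spread_x.
Qed.

Section AddEdge.
Variables (s : {set 'I_m}) (c : {ffun V -> bool}) (e : 'I_m).
Hypothesis valid_sc : valid_state ends (s, c).
Let u := (ends e).1.
Let v := (ends e).2.

Lemma spread_xU1 w :
  spread_x (e |: s) c w = [|| c w, sconn s w u && c v | sconn s w v && c u].
Proof.
have cE := valid_state_sconn valid_sc.
rewrite ffunE; apply/existsP/idP.
  case=> x /andP[]; rewrite sconnU1 => /or3P[wx|/andP[wu vx]|/andP[wv ux]] cx.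
  - by rewrite (cE _ _ wx) cx.
  - by rewrite wu (cE _ _ vx) cx orbT.
  - by rewrite wv (cE _ _ ux) cx !orbT.
case/or3P=> [cw|/andP[wu cv]|/andP[wv cu]].
- by exists w; rewrite sconnxx.
- by exists v; rewrite sconnU1 wu sconnxx cv orbT.
- by exists u; rewrite sconnU1 wv sconnxx cu !orbT.
Qed.

Lemma links_xU1 : links_x s c (e |: s) = [&& ~~ sconn s u v, c u & c v].
Proof.
have cE := valid_state_sconn valid_sc.
apply/idP/idP; last first.
  case/and3P=> nuv cu cv; apply/existsP; exists u; apply/existsP; exists v.
  by rewrite cu cv nuv sconnU1 !sconnxx orbT.
case/existsP=> x /existsP[y /and4P[cx cy]].
rewrite sconnU1 => /or3P[-> //|/andP[xu vy]|/andP[xv uy]] nxy.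
  rewrite -(cE _ _ xu) (cE _ _ vy) cx cy !andbT.
  by apply: contra nxy => uv; apply: sconn_trans xu (sconn_trans uv vy).
rewrite (cE _ _ uy) -(cE _ _ xv) cx cy !andbT.
apply: contra nxy => uv; rewrite sconn_sym in uv.
exact: sconn_trans xv (sconn_trans uv uy).
Qed.

Lemma state_e_enlarge : state_e ends (s, c) e = enlarge (s, c) (e |: s).
Proof.
have cE := valid_state_sconn valid_sc.
rewrite /state_e /enlarge /= links_xU1 -/u -/v.
have [uv | nuv] /= := boolP (sconn s u v).
  congr (Some (_, _)); apply/ffunP=> w; rewrite spread_xU1 (cE _ _ uv).
  have [wu|nwu] := boolP (sconn s w u).
    by rewrite (cE _ _ wu) (cE _ _ uv); case: (c v); rewrite /= ?andbF.
  have nwv : ~~ sconn s w v.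
    by apply: contra nwu => wv; rewrite sconn_sym in uv; apply: sconn_trans wv uv.
  by rewrite (negbTE nwv) /= orbF.
case: ifP => // cuv; congr (Some (_, _)); apply/ffunP=> w.
rewrite spread_xU1 ffunE (sconn_sym _ u) (sconn_sym _ v).
have [wu|_] /= := boolP (sconn s w u).
  by rewrite (cE _ _ wu); case: (c u); rewrite ?andbF ?orbF.
have [wv|_] := boolP (sconn s w v); last by rewrite orbF.
by rewrite (cE _ _ wv) orbC.
Qed.

End AddEdge.

End Components.

Lemma n_beforeU1 (m : nat) (s : {set 'I_m}) e e' : e \notin s ->
  n_before (e |: s) e' = (n_before s e' + (e < e'))%N.
Proof.
move=> es; rewrite /n_before.
have -> : [set x in e |: s | (x < e')%N] =
    if (e < e')%N then e |: [set x in s | (x < e')%N] else [set x in s | (x < e')%N].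
  apply/setP=> x; case: ifP => ee'; rewrite !inE.
    by case: (eqVneq x e) => [->|] //=; rewrite ee'.
  by case: (eqVneq x e) => [->|] //=; rewrite ee' andbF.
by case: ifP => _; rewrite ?addn0 // cardsU1 inE (negbTE es) addnC.
Qed.

Definition pair_sign (m : nat) (s : {set 'I_m}) e e' : int :=
  (-1) ^+ (n_before s e + n_before (e |: s) e').

Lemma pair_sign_swap (m : nat) (s : {set 'I_m}) e e' :
  e \notin s -> e' \notin s -> e != e' -> pair_sign s e' e = - pair_sign s e e'.
Proof.
move=> es e's ee'; rewrite /pair_sign !n_beforeU1 //.
have [_ | _ | /val_inj eq_ee'] := ltngtP e e';
  last by rewrite eq_ee' eqxx in ee'.
  by rewrite /= addn0 addn1 addnS exprS mulN1r opprK [(n_before s e' + _)%N]addnC.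
by rewrite /= addn0 addn1 addnS exprS mulN1r [(n_before s e' + _)%N]addnC.
Qed.

Lemma sum_antisym (R : numDomainType) (I : finType) (A : I -> I -> R) :
  (forall i j, A i j = - A j i) -> \sum_i \sum_j A i j = 0.
Proof.
move=> A_anti; have sumN : \sum_i \sum_j A i j = - \sum_i \sum_j A i j.
  rewrite [LHS]exchange_big -sumrN; apply: eq_bigr => j _.
  by rewrite -sumrN; apply: eq_bigr => i _; apply: A_anti.
by apply/eqP; rewrite -eqNr -sumN.
Qed.

Lemma sum_opt_coef (V : finType) (m : nat) (o : option (state V m))
    (F : state V m -> int) :
  \sum_S opt_coef o S * F S = oapp F 0 o.
Proof.
case: o => [T|] /=; last by rewrite big1 // => S _; rewrite mul0r.
rewrite (bigD1 T) //= eqxx mul1r big1 ?addr0 // => S /negbTE ST.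
by rewrite ST mul0r.
Qed.

Lemma sum_neq0 (R : nmodType) (I : finType) (P : pred I) (F : I -> R) :
  \sum_(i | P i) F i != 0 -> exists2 i, P i & F i != 0.
Proof.
have [i /andP[Pi Fi] _|F0] := pickP [pred i | P i && (F i != 0)]; first by exists i.
by rewrite big1 ?eqxx // => i Pi; move: (F0 i) => /=; rewrite Pi => /negbFE/eqP.
Qed.

Section Differential.
Variables (V : finType) (m : nat) (ends : 'I_m -> V * V).
Implicit Types (S T : state V m) (t : {set 'I_m}) (z : chain V m).

Local Notation enlarge := (enlarge ends).

Lemma d_state_enlarge S T : valid_state ends S ->
  d_state ends S T = \sum_(e | e \notin S.1)
     (-1) ^+ n_before S.1 e * opt_coef (enlarge S (e |: S.1)) T.
Proof.
case: S => s c vS; rewrite ffunE; apply: eq_bigr => e _.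
by rewrite state_e_enlarge.
Qed.

Lemma d_state_oapp_enlarge S t T : S.1 \subset t ->
  oapp (d_state ends ^~ T) 0 (enlarge S t) =
  \sum_(e | e \notin t) (-1) ^+ n_before t e * opt_coef (enlarge S (e |: t)) T.
Proof.
move=> St; have enlargeU1 e := enlarge_trans ends St (subsetU1 e t).
case St': (enlarge S t) => [S'|] /=.
  have [vS' S't] := enlarge_some St'.
  by rewrite d_state_enlarge // S't; apply: eq_bigr => e _; rewrite -enlargeU1 St'.
by apply/esym/big1 => e _; rewrite -enlargeU1 St' mulr0.
Qed.

Lemma d_d_state S T : valid_state ends S ->
  \sum_S' d_state ends S S' * d_state ends S' T = 0.
Proof.
case: S => s c vS.
pose A e e' := if [&& e \notin s, e' \notin s & e != e']
  then pair_sign s e e' * opt_coef (enlarge (s, c) (e' |: (e |: s))) T else 0.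
transitivity (\sum_e \sum_e' A e e'); last first.
  apply: sum_antisym => e e'; rewrite /A eq_sym.
  have [es|] /= := boolP (e \notin s); last by rewrite andbF oppr0.
  have [e's|] /= := boolP (e' \notin s); last by rewrite oppr0.
  have [_|ee'] /= := eqVneq e' e; first by rewrite oppr0.
  by rewrite [e' |: _]setUCA (pair_sign_swap e's es ee') mulNr.
under eq_bigr => S' _ do rewrite d_state_enlarge // big_distrl.
rewrite exchange_big big_mkcond; apply: eq_bigr => e _ /=.
under eq_bigr => S' _ do rewrite -mulrA.
rewrite -big_distrr sum_opt_coef d_state_oapp_enlarge ?subsetU1 //.
have [es|] /= := boolP (e \notin s); last first.
  by move=> /negPn es; apply/esym/big1 => e' _; rewrite /A es.
rewrite big_distrr big_mkcond; apply: eq_bigr => e' _ /=.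
rewrite /A es in_setU1 negb_or eq_sym.
case: (e' \notin s) (e != e') => [] [] //=; rewrite ?mulr0 //.
by rewrite mulrA -exprD.
Qed.

Lemma d_d z : (forall S, z S != 0 -> valid_state ends S) -> d ends (d ends z) = 0.
Proof.
move=> z_valid; apply/ffunP=> T; rewrite !ffunE.
under eq_bigr => S' _ do rewrite ffunE big_distrl.
rewrite exchange_big; apply: big1 => S _ /=.
under eq_bigr => S' _ do rewrite -mulrA.
rewrite -big_distrr /=; have [->|/z_valid vS] := eqVneq (z S) 0; first by rewrite mul0r.
by rewrite d_d_state ?mulr0.
Qed.

Lemma d_state_supp S T :
  d_state ends S T != 0 -> exists2 e, e \notin S.1 & state_e ends S e = Some T.
Proof.
rewrite ffunE => /sum_neq0[e es]; rewrite mulf_eq0 negb_or => /andP[_].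
case Se: (state_e ends S e) => [T'|] //=.
by case: (T =P T') => [-> _|_]; [exists e | rewrite eqxx].
Qed.

Lemma d_state_edges S T : d_state ends S T != 0 -> S.1 \subset T.1.
Proof.
case/d_state_supp=> e _; rewrite /state_e.
by do 2?case: ifP => _; move=> // -[<-]; exact: subsetU1.
Qed.

Lemma d_supp z T : d ends z T != 0 -> exists2 S, z S != 0 & d_state ends S T != 0.
Proof.
by rewrite ffunE => /sum_neq0[S _]; rewrite mulf_eq0 negb_or => /andP[]; exists S.
Qed.

Lemma inC_d i z : inC ends i z -> inC ends i.+1 (d ends z).
Proof.
move=> zC T /d_supp[S /zC[vS cardS] /d_state_supp[e es]].
move: vS es cardS; case: S => s c /= vS es cardS.
rewrite state_e_enlarge // => /enlarge_some[vT ->].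
by rewrite cardsU1 es cardS.
Qed.

Lemma d0 : d ends 0 = 0.
Proof. by apply/ffunP=> T; rewrite !ffunE big1 // => S _; rewrite ffunE mul0r. Qed.

End Differential.

Section Balanced.
Variables (V : finType) (m : nat) (ends : 'I_m -> V * V) (sigma : 'I_m -> int).
Implicit Types (s t : {set 'I_m}) (z : chain V m).

Local Notation f_b := (f_b ends sigma).

Lemma balancedS s t : s \subset t -> balanced ends sigma t -> balanced ends sigma s.
Proof.
move=> st; apply: contra => /existsP[k /existsP[es /existsP[vs]]].
case/andP=> /and5P[k0 ues uvs /allP es_s cyc] neg.
apply/existsP; exists k; apply/existsP; exists es; apply/existsP; exists vs.
rewrite /is_neg_circuit /is_circuit k0 ues uvs cyc neg !andbT /=.
by apply/allP=> e /es_s/(subsetP st).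
Qed.

Lemma f_b0 : f_b 0 = 0.
Proof. by apply/ffunP=> S; rewrite !ffunE; case: ifP. Qed.

Lemma f_b_d_f_b z : f_b (d ends (f_b z)) = f_b (d ends z).
Proof.
apply/ffunP=> T; rewrite !ffunE; case: ifP => // balT.
apply: eq_bigr => S _; rewrite ffunE.
have [->|/d_state_edges ST] := eqVneq (d_state ends S T) 0; first by rewrite !mulr0.
by rewrite (balancedS ST balT).
Qed.

Lemma inCb_f_b i z : inC ends i z -> inCb ends sigma i (f_b z).
Proof.
move=> zC; split=> S; rewrite ffunE; case: ifP => [bS|_]; rewrite ?eqxx //.
exact: zC.
Qed.

End Balanced.

Unset Implicit Arguments.
Theorem mainTheorem9 (V : finType) (m : nat) (ends : 'I_m -> V * V)
    (sigma : 'I_m -> int) (Hsigma : forall e, sigma e = 1 \/ sigma e = -1) :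
  (forall (i : nat) (z : chain V m),
      inC ends i z -> f_b ends sigma z = 0 -> f_b ends sigma (d ends z) = 0) /\
  (forall (i : nat) (z : chain V m),
      inCb ends sigma i z -> inCb ends sigma i.+1 (d_b ends sigma z)) /\
  (forall (i : nat) (z : chain V m),
      inC ends i z -> d_b ends sigma (f_b ends sigma z) = f_b ends sigma (d ends z)) /\
  (forall (i : nat) (z : chain V m),
      inCb ends sigma i z -> d_b ends sigma (d_b ends sigma z) = 0).
Proof.
split; [|split; [|split]].
- by move=> i z _ fz0; rewrite -f_b_d_f_b fz0 d0 f_b0.
- by move=> i z [zC _]; apply: inCb_f_b (inC_d zC).
- by move=> i z _; apply: f_b_d_f_b.
- move=> i z [zC _]; rewrite /d_b f_b_d_f_b d_d ?f_b0 //.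
  by move=> S /zC[].
Qed.
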